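(* Let $(M,g)$ be a semi-Riemannian manifold with Levi-Civita connection $\overset{\circ}{\nabla}$, and let $\nabla$ be an affine connection on $M$ of the form $\nabla_X Y=\overset{\circ}{\nabla}_X Y+U(-,X,Y)$ for all vector fields $X,Y$, where $U$ is a $(1,2)$-tensor field. Fix a different affine connection $\overset{A}{\nabla}$ on $M$ with torsion tensor $\overset{A}{T}$ and non-metricity tensor $\overset{A}{Q}$ satisfying $$\overset{A}{Q}(X,Y,Z)+\overset{A}{Q}(Z,X,Y)+\overset{A}{Q}(Y,Z,X)=0\quad\text{for all vector fields }X,Y,Z,$$ and let $\pi,W$ be two one-forms on $M$. If $U$ is given, for all one-forms $\omega$ and vector fields $X,Y$, by any one of the following: (i) $U(\omega,X,Y)=\frac12\left(\overset{A}{T}(X^\flat,Y,\omega^\sharp)+\overset{A}{T}(Y^\flat,X,\omega^\sharp)\right)$; (ii) $U(\omega,X,Y)=\frac12\left(X^\flat\big(\pi(\omega^\sharp)Y-\pi(Y)\omega^\sharp\big)+Y^\flat\big(\pi(\omega^\sharp)X-\pi(X)\omega^\sharp\big)\right)$; (iii) $U(\omega,X,Y)=-\overset{A}{Q}(\omega^\sharp,X,Y)$; (iv) $U(\omega,X,Y)=\frac12\left(\overset{A}{T}(X^\flat,Y,\omega^\sharp)+\overset{A}{T}(Y^\flat,X,\omega^\sharp)\right)-\overset{A}{Q}(\omega^\sharp,X,Y)$; (v) $U(\omega,X,Y)=\pi(\omega^\sharp)W(X)W(Y)-\frac12\left(W(\omega^\sharp)W(X)\pi(Y)+W(\omega^\sharp)W(Y)\pi(X)\right)$,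 then $\nabla$ is a Schrödinger connection.
   Context: Musical isomorphisms: $X^\flat=g(X,-)$, $\omega^\sharp=g^{-1}(\omega,-)$. For a $(1,2)$-tensor field $U$, $U(-,X,Y)$ denotes the vector field with $\omega(U(-,X,Y))=U(\omega,X,Y)$. An affine connection $\nabla$ with $\nabla_XY=\overset{\circ}{\nabla}_XY+U(-,X,Y)$ is called a Schrödinger connection if for all vector fields $X,Y$ and one-forms $\omega$: (a) $U(\omega,X,Y)=U(\omega,Y,X)$, and (b) $U(\omega,X,Y)+U(\omega,Y,X)+U(X^\flat,\omega^\sharp,Y)+U(X^\flat,Y,\omega^\sharp)+U(Y^\flat,\omega^\sharp,X)+U(Y^\flat,X,\omega^\sharp)=0$. For an affine connection $\overset{A}{\nabla}$, its torsion is $\overset{A}{T}(\omega,X,Y)=\omega(\overset{A}{\nabla}_XY-\overset{A}{\nabla}_YX-[X,Y])$ and its non-metricity is $\overset{A}{Q}(X,Y,Z)=-(\overset{A}{\nabla}_Xg)(Y,Z)$. An expression such as $X^\flat(V)$ for a vector field $V$ means $g(X,V)$. *)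

(* Algebraic (tensorial) model of a semi-Riemannian manifold:
   F  = ring of smooth functions (commutative, with 2 invertible),
   V  = F-module of vector fields,
   act X f = X(f) (derivation), br = Lie bracket,
   one-forms = F-linear maps V -> F,
   g = symmetric F-bilinear nondegenerate metric, sharp = inverse of flat. *)
From mathcomp Require Import all_boot all_algebra.
Set Implicit Arguments. Unset Strict Implicit. Unset Printing Implicit Defensive.
Import GRing.Theory.
Local Open Scope ring_scope.

Section Defs.
Variables (F : comUnitRingType) (V : lmodType F).

Definition one_form (w : V -> F) : Prop :=
  forall (a : F) (x y : V), w (a *: x + y) = a * w x + w y.

Definition is_anchor (act : V -> F -> F) : Prop :=
  (forall a X Y f, act (a *: X + Y) f = a * act X f + act Y f) /\
  (forall X f h, act X (f + h) = act X f + act X h) /\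
  (forall X f h, act X (f * h) = act X f * h + f * act X h).

Definition is_lie_bracket (act : V -> F -> F) (br : V -> V -> V) : Prop :=
  (forall X Y, br X Y = - br Y X) /\
  (forall X Y Z, br X (Y + Z) = br X Y + br X Z) /\
  (forall X f Y, br X (f *: Y) = act X f *: Y + f *: br X Y) /\
  (forall X Y Z, br X (br Y Z) + br Y (br Z X) + br Z (br X Y) = 0) /\
  (forall X Y f, act (br X Y) f = act X (act Y f) - act Y (act X f)).

Definition is_metric (g : V -> V -> F) : Prop :=
  (forall X Y, g X Y = g Y X) /\
  (forall Y, one_form (fun X => g X Y)) /\
  (forall X, (forall Y, g X Y = 0) -> X = 0).

Definition is_sharp (g : V -> V -> F) (sharp : (V -> F) -> V) : Prop :=
  forall w, one_form w -> forall Y, g (sharp w) Y = w Y.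

Definition affine_connection (act : V -> F -> F) (nab : V -> V -> V) : Prop :=
  (forall a X Y Z, nab (a *: X + Y) Z = a *: nab X Z + nab Y Z) /\
  (forall X Y Z, nab X (Y + Z) = nab X Y + nab X Z) /\
  (forall X f Y, nab X (f *: Y) = act X f *: Y + f *: nab X Y).

Definition torsion (br : V -> V -> V) (nab : V -> V -> V) (w : V -> F) (X Y : V) : F :=
  w (nab X Y - nab Y X - br X Y).

Definition nonmetricity (act : V -> F -> F) (g : V -> V -> F) (nab : V -> V -> V)
  (X Y Z : V) : F :=
  - (act X (g Y Z) - g (nab X Y) Z - g Y (nab X Z)).

Definition levi_civita act br g (nab : V -> V -> V) : Prop :=
  affine_connection act nab /\
  (forall X Y, nab X Y - nab Y X - br X Y = 0) /\
  (forall X Y Z, nonmetricity act g nab X Y Z = 0).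

(* a (1,2)-tensor field, represented by the vector field U(-,X,Y) *)
Definition tensor12 (Uv : V -> V -> V) : Prop :=
  (forall a X Y Z, Uv (a *: X + Y) Z = a *: Uv X Z + Uv Y Z) /\
  (forall a X Y Z, Uv Z (a *: X + Y) = a *: Uv Z X + Uv Z Y).

Definition Uapp (Uv : V -> V -> V) (w : V -> F) (X Y : V) : F := w (Uv X Y).

(* conditions (a) and (b); X^flat = g X *)
Definition schroedinger_U (g : V -> V -> F) (sharp : (V -> F) -> V)
  (Uv : V -> V -> V) : Prop :=
  forall w X Y, one_form w ->
    Uapp Uv w X Y = Uapp Uv w Y X /\
    Uapp Uv w X Y + Uapp Uv w Y X
    + Uapp Uv (g X) (sharp w) Y + Uapp Uv (g X) Y (sharp w)
    + Uapp Uv (g Y) (sharp w) X + Uapp Uv (g Y) X (sharp w) = 0.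

Definition schroedinger_connection g sharp (LC nab : V -> V -> V) : Prop :=
  schroedinger_U g sharp (fun X Y => nab X Y - LC X Y).

End Defs.

(* Put [u Z X Y := U(Z^flat, X, Y)].  Since [(X^flat)^sharp = X], conditions (a)
   and (b) say that [u] is symmetric in its last two arguments and that its total
   symmetrization vanishes; both are linear conditions on [u].  They hold for
   - [t X Y Z + t Y X Z] whenever [t] is antisymmetric in its last two arguments,
     as the torsion is: case (i);
   - any [q] symmetric in its last two arguments with vanishing cyclic sum,
     as the non-metricity is by hypothesis: case (iii);
   - [pi Z (h X Y + h Y X) - pi Y h X Z - pi X h Y Z] for arbitrary [pi] and [h]:
     cases (ii) and (v) are the instances [h = g] and [h = W (x) W].
   Case (iv) is the sum of cases (i) and (iii). *)
From mathcomp Require Import all_boot all_algebra.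
From mathcomp Require Import ring.
Set Implicit Arguments. Unset Strict Implicit. Unset Printing Implicit Defensive.
Import GRing.Theory.
Local Open Scope ring_scope.

Section OneForm.
Variables (F : comUnitRingType) (V : lmodType F) (w : V -> F).
Hypothesis w_lin : one_form w.

Lemma one_formD x y : w (x + y) = w x + w y.
Proof. by have := w_lin 1 x y; rewrite scale1r mul1r. Qed.

Lemma one_form0 : w 0 = 0.
Proof. by apply: (addrI (w 0)); rewrite -one_formD !addr0. Qed.

Lemma one_formZ a x : w (a *: x) = a * w x.
Proof. by have := w_lin a x 0; rewrite !addr0 one_form0 addr0. Qed.

Lemma one_formN x : w (- x) = - w x.
Proof. by rewrite -scaleN1r one_formZ mulN1r. Qed.

Lemma one_formB x y : w (x - y) = w x - w y.
Proof. by rewrite one_formD one_formN. Qed.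

End OneForm.

Section Metric.
Variables (F : comUnitRingType) (V : lmodType F) (g : V -> V -> F).
Hypothesis g_metric : is_metric g.

Lemma metricC X Y : g X Y = g Y X.
Proof. by case: g_metric. Qed.

Lemma metric_flat X : one_form (g X).
Proof.
case: g_metric => _ [lin_l _] a x y.
by rewrite !(metricC X) lin_l.
Qed.

Lemma metricZr X a Y : g X (a *: Y) = a * g X Y.
Proof. exact: (one_formZ (metric_flat X)). Qed.

Lemma metricBr X Y Z : g X (Y - Z) = g X Y - g X Z.
Proof. exact: (one_formB (metric_flat X)). Qed.

Lemma sharp_flat sharp : is_sharp g sharp -> forall X, sharp (g X) = X.
Proof.
move=> g_sharp X; case: g_metric => _ [lin_l nondeg].
apply/eqP; rewrite -subr_eq0; apply/eqP/nondeg => Y.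
by rewrite (one_formB (lin_l Y)) g_sharp ?subrr //; apply: metric_flat.
Qed.

End Metric.

Section SchroedingerForm.
Variables (F : comUnitRingType) (V : lmodType F).
Implicit Types (u v : V -> V -> V -> F).

Definition schroedinger_form u : Prop :=
  (forall Z X Y, u Z X Y = u Z Y X) /\
  (forall Z X Y, u Z X Y + u Z Y X + u X Z Y + u X Y Z + u Y Z X + u Y X Z = 0).

Lemma eq_schroedinger_form u v :
  (forall Z X Y, u Z X Y = v Z X Y) -> schroedinger_form u -> schroedinger_form v.
Proof.
move=> eq_uv [u_sym u_sum].
by split=> Z X Y; rewrite -!eq_uv; [apply: u_sym | apply: u_sum].
Qed.

Lemma schroedinger_formD u v :
  schroedinger_form u -> schroedinger_form v ->
  schroedinger_form (fun Z X Y => u Z X Y + v Z X Y).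
Proof.
move=> [u_sym u_sum] [v_sym v_sum]; split=> Z X Y; first by rewrite u_sym v_sym.
by rewrite -[0](addr0 0) -{1}(u_sum Z X Y) -(v_sum Z X Y); ring.
Qed.

Lemma schroedinger_formZ c u :
  schroedinger_form u -> schroedinger_form (fun Z X Y => c * u Z X Y).
Proof.
move=> [u_sym u_sum]; split=> Z X Y; first by rewrite u_sym.
by rewrite -!mulrDr u_sum mulr0.
Qed.

Lemma schroedinger_formN u :
  schroedinger_form u -> schroedinger_form (fun Z X Y => - u Z X Y).
Proof.
move=> u_form; apply: eq_schroedinger_form (schroedinger_formZ (-1) u_form).
by move=> Z X Y; rewrite mulN1r.
Qed.

Lemma schroedinger_form_antisym (t : V -> V -> V -> F) :
  (forall A B C, t A C B = - t A B C) ->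
  schroedinger_form (fun Z X Y => t X Y Z + t Y X Z).
Proof.
move=> t_anti; split=> Z X Y; first by rewrite addrC.
rewrite (t_anti X Z Y) (t_anti Y Z X) (t_anti Z Y X); ring.
Qed.

Lemma schroedinger_form_cyclic u :
  (forall Z X Y, u Z X Y = u Z Y X) ->
  (forall X Y Z, u X Y Z + u Z X Y + u Y Z X = 0) ->
  schroedinger_form u.
Proof.
move=> u_sym u_cyc; split=> // Z X Y.
rewrite -(u_sym Z X Y) (u_sym X Z Y) -(u_sym Y Z X).
transitivity (2%:R * (u Z X Y + u Y Z X + u X Y Z)); first by ring.
by rewrite u_cyc mulr0.
Qed.

Lemma schroedinger_form_outer (pi : V -> F) (h : V -> V -> F) :
  schroedinger_form
    (fun Z X Y => pi Z * (h X Y + h Y X) - pi Y * h X Z - pi X * h Y Z).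
Proof. by split=> Z X Y; ring. Qed.

Lemma schroedinger_U_of_form (g : V -> V -> F) (sharp : (V -> F) -> V)
    (Uv : V -> V -> V) u :
  is_metric g -> is_sharp g sharp ->
  (forall w X Y, one_form w -> Uapp Uv w X Y = u (sharp w) X Y) ->
  schroedinger_form u -> schroedinger_U g sharp Uv.
Proof.
move=> g_metric g_sharp Uv_u [u_sym u_sum] w X Y w_lin.
have flat_Uv Z A B : Uapp Uv (g Z) A B = u Z A B.
  by rewrite -[in RHS](sharp_flat g_metric g_sharp Z) Uv_u //; apply: metric_flat.
by rewrite !flat_Uv !Uv_u.
Qed.

End SchroedingerForm.

Section Connection.
Variables (F : comUnitRingType) (V : lmodType F).

Lemma torsionC (br nab : V -> V -> V) (w : V -> F) X Y :
  (forall X Y, br X Y = - br Y X) -> one_form w ->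
  torsion br nab w Y X = - torsion br nab w X Y.
Proof.
move=> brC w_lin; rewrite /torsion -one_formN // (brC Y X).
by congr (w _); rewrite !opprB opprK addrC addrA.
Qed.

Lemma nonmetricityC act (g : V -> V -> F) (nab : V -> V -> V) X Y Z :
  is_metric g -> nonmetricity act g nab X Y Z = nonmetricity act g nab X Z Y.
Proof.
move=> g_metric; rewrite /nonmetricity (metricC g_metric Z Y).
by rewrite (metricC g_metric (nab X Z)) (metricC g_metric Z) addrAC.
Qed.

Lemma schroedinger_connection_of_U (g : V -> V -> F) (sharp : (V -> F) -> V)
    (LC nab Uv : V -> V -> V) :
  (forall X Y, nab X Y = LC X Y + Uv X Y) ->
  schroedinger_U g sharp Uv -> schroedinger_connection g sharp LC nab.
Proof.
move=> def_nab Uv_schroedinger w X Y w_lin.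
have nab_LC A B : nab A B - LC A B = Uv A B by rewrite def_nab addrC addKr.
by rewrite /Uapp !nab_LC; apply: Uv_schroedinger.
Qed.

End Connection.

Theorem mainTheorem1 (F : comUnitRingType) (V : lmodType F)
  (act : V -> F -> F) (br : V -> V -> V)
  (g : V -> V -> F) (sharp : (V -> F) -> V)
  (LC nab nabA Uv : V -> V -> V) (pi W : V -> F) :
  (2%:R : F) \is a GRing.unit ->
  is_anchor act -> is_lie_bracket act br ->
  is_metric g -> is_sharp g sharp ->
  levi_civita act br g LC ->
  affine_connection act nab -> tensor12 Uv ->
  (forall X Y, nab X Y = LC X Y + Uv X Y) ->
  affine_connection act nabA ->
  (forall X Y Z, nonmetricity act g nabA X Y Z + nonmetricity act g nabA Z X Y
                 + nonmetricity act g nabA Y Z X = 0) ->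
  one_form pi -> one_form W ->
  ((forall w X Y, one_form w -> Uapp Uv w X Y =
       (2%:R)^-1 * (torsion br nabA (g X) Y (sharp w) + torsion br nabA (g Y) X (sharp w)))
   \/ (forall w X Y, one_form w -> Uapp Uv w X Y =
       (2%:R)^-1 * (g X (pi (sharp w) *: Y - pi Y *: sharp w)
                    + g Y (pi (sharp w) *: X - pi X *: sharp w)))
   \/ (forall w X Y, one_form w -> Uapp Uv w X Y =
       - nonmetricity act g nabA (sharp w) X Y)
   \/ (forall w X Y, one_form w -> Uapp Uv w X Y =
       (2%:R)^-1 * (torsion br nabA (g X) Y (sharp w) + torsion br nabA (g Y) X (sharp w))
       - nonmetricity act g nabA (sharp w) X Y)
   \/ (forall w X Y, one_form w -> Uapp Uv w X Y =
       pi (sharp w) * W X * W Y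
       - (2%:R)^-1 * (W (sharp w) * W X * pi Y + W (sharp w) * W Y * pi X))) ->
  schroedinger_connection g sharp LC nab.
Proof.
move=> two_unit _ [brC _] g_metric g_sharp _ _ _ def_nab _ Q_cyc _ _ U_cases.
apply: (schroedinger_connection_of_U def_nab).
have torsion_form : schroedinger_form (fun Z X Y =>
    (2%:R)^-1 * (torsion br nabA (g X) Y Z + torsion br nabA (g Y) X Z)).
  apply/schroedinger_formZ/schroedinger_form_antisym => A B C.
  exact: torsionC brC (metric_flat g_metric A).
have Q_form :
    schroedinger_form (fun Z X Y => - nonmetricity act g nabA Z X Y).
  apply/schroedinger_formN/schroedinger_form_cyclic => // Z X Y.
  exact: nonmetricityC.
have outer_form h := schroedinger_formZ (2%:R)^-1 (schroedinger_form_outer pi h).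
have g_form : schroedinger_form (fun Z X Y =>
    (2%:R)^-1 * (g X (pi Z *: Y - pi Y *: Z) + g Y (pi Z *: X - pi X *: Z))).
  apply: eq_schroedinger_form (outer_form g) => Z X Y.
  by rewrite !(metricBr g_metric) !(metricZr g_metric); ring.
have W_form : schroedinger_form (fun Z X Y =>
    pi Z * W X * W Y - (2%:R)^-1 * (W Z * W X * pi Y + W Z * W Y * pi X)).
  apply: eq_schroedinger_form (outer_form (fun X Y => W X * W Y)) => Z X Y.
  ring: (mulVr two_unit).
case: U_cases => [|[|[|[|]]]] Uv_def;
  apply: (schroedinger_U_of_form g_metric g_sharp Uv_def).
- exact: torsion_form.
- exact: g_form.
- exact: Q_form.
- exact: schroedinger_formD torsion_form Q_form.
- exact: W_form.
Qed.
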